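(* Let $A$ be a T-brace and suppose that $a\in\zeta_n(\star,A)$ for some natural number $n$. Let $a_1=a$ and $a_{i+1}=a_i\star a_i$ for all $i\geq 1$. Then (i) $\mathbf{br}(a)$ is an ideal of $A$ and $\mathbf{br}(a)=\langle a_1\rangle+\langle a_2\rangle+\dots+\langle a_n\rangle$; (ii) if the additive group of $\zeta(\star,A)$ is torsion-free, then $\mathbf{br}(a)=\langle a_1\rangle\oplus\langle a_2\rangle\oplus\dots\oplus\langle a_n\rangle$. Here $\langle x\rangle$ denotes the cyclic subgroup of $(A,+)$ generated by $x$.
   Context: A (left) brace is a set $A$ with two operations $+$ and $\cdot$ such that $(A,+)$ is an abelian group, $(A,\cdot)$ is a group, and $a(b+c)=ab+ac-a$ for all $a,b,c\in A$. Put $a\star b=ab-a-b$. A subbrace is a subset which is a subgroup of both $(A,+)$ and $(A,\cdot)$; $\mathbf{br}(a)$ is the intersection of all subbraces containing $a$. A subbrace $L$ is an ideal if $a\star z, z\star a\in L$ for all $a\in A$, $z\in L$, and then the quotient brace $A/L$ is defined. $A$ is a T-brace if whenever $I$ is an ideal of $J$ and $J$ is an ideal of $A$, then $I$ is an ideal of $A$. The $\star$-center is $\zeta(\star,A)=\{a: a\star x=x\star a=0\ \forall x\}$; the upper $\star$-central series is $\zeta_0(\star,A)=0$, $\zeta_{n+1}(\star,A)/\zeta_n(\star,A)=\zeta(\star,A/\zeta_n(\star,A))$. *)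

From HB Require Import structures.
From mathcomp Require Import all_boot all_order all_algebra.
Set Implicit Arguments. Unset Strict Implicit. Unset Printing Implicit Defensive.
Import GRing.Theory.
Local Open Scope ring_scope.

Record brace (V : zmodType) := Brace {
  bmul : V -> V -> V;
  binv : V -> V;
  bone : V;
  bmulA : forall a b c, bmul a (bmul b c) = bmul (bmul a b) c;
  bmul1l : forall a, bmul bone a = a;
  bmul1r : forall a, bmul a bone = a;
  bmulVl : forall a, bmul (binv a) a = bone;
  bmulVr : forall a, bmul a (binv a) = bone;
  bdistr : forall a b c, bmul a (b + c) = bmul a b + bmul a c - a
}.

Section BraceDefs.
Variables (V : zmodType) (B : brace V).

Definition star (a b : V) : V := bmul B a b - a - b.

Definition subbrace (S : V -> Prop) : Prop :=
  (S 0 /\ (forall x y, S x -> S y -> S (x + y)) /\ (forall x, S x -> S (- x))) /\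
  (S (bone B) /\ (forall x y, S x -> S y -> S (bmul B x y))
    /\ (forall x, S x -> S (binv B x))).

Definition br (a : V) : V -> Prop :=
  fun x => forall S, subbrace S -> S a -> S x.

Definition ideal_of (J I : V -> Prop) : Prop :=
  [/\ (forall x, I x -> J x), subbrace I
    & forall a z, J a -> I z -> I (star a z) /\ I (star z a)].

Definition ideal (L : V -> Prop) : Prop := ideal_of (fun _ => True) L.

Definition T_brace : Prop :=
  forall I J : V -> Prop, ideal J -> ideal_of J I -> ideal I.

Definition star_center (a : V) : Prop :=
  forall x, star a x = 0 /\ star x a = 0.

(* upper star-central series: zeta_0 = 0, and a + zeta_n lies in the
   star-center of A / zeta_n iff a*x and x*a lie in zeta_n for all x
   (star in the quotient is computed on representatives). *)
Fixpoint zeta_star (n : nat) : V -> Prop :=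
  match n with
  | 0 => fun a => a = 0
  | k.+1 => fun a => forall x, zeta_star k (star a x) /\ zeta_star k (star x a)
  end.

(* a_1 = a, a_{i+1} = a_i * a_i ; here 0-indexed: aseq a i = a_{i+1} *)
Fixpoint aseq (a : V) (i : nat) : V :=
  match i with
  | 0 => a
  | k.+1 => star (aseq a k) (aseq a k)
  end.

Definition cyc_sum (a : V) (n : nat) : V -> Prop :=
  fun x => exists k : 'I_n -> int, x = \sum_(i : 'I_n) (aseq a i *~ k i).

Definition cyc_sum_direct (a : V) (n : nat) : Prop :=
  forall k : 'I_n -> int, \sum_(i : 'I_n) (aseq a i *~ k i) = 0 ->
    forall i : 'I_n, aseq a i *~ k i = 0.

End BraceDefs.

From HB Require Import structures.
From mathcomp Require Import all_boot all_order all_algebra.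
Set Implicit Arguments. Unset Strict Implicit. Unset Printing Implicit Defensive.
Import GRing.Theory.
Local Open Scope ring_scope.

(* The map x |-> a ⋆ x is additive and (a b) ⋆ c = a ⋆ (b ⋆ c) + a ⋆ c + b ⋆ c.
   Together with u + z = u lambda_{u^-1}(z), this makes u |-> u ⋆ y additive
   modulo an ideal M along elements that are central modulo M.
   (i) Induct on the central height of a relative to an ideal N: the sets
   J = <a_1,...,a_n> + ζ(A/N) and K = <a_2,...,a_{n+1}> + N are ideals by
   induction, and I = <a_1> + K lies in J and is closed under ⋆ with J, so it is
   an ideal of J, hence of A since A is a T-brace.  For N = 0 this ideal is a
   subbrace containing a and contained in br(a).
   (ii) Additivity modulo ζ_j makes every factor ζ_{j+1}/ζ_j torsion-free.  A
   relation a_1 k_1 + ... + a_n k_n = 0 puts a_1 k_1 in <a_2,...,a_n>, which lies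
   in ζ_{n-1}; so a_1 is in ζ_{n-1}, a_n = 0, and induction gives a_1 k_1 = 0. *)

Section AddGroup.
Variable V : zmodType.
Implicit Types (M P Q : V -> Prop) (x y : V).

Record addgroup M : Prop := AddGroup {
  grp0 : M 0;
  grpD : forall x y, M x -> M y -> M (x + y);
  grpN : forall x, M x -> M (- x) }.

Definition sumset P Q x := exists p q, [/\ P p, Q q & x = p + q].

Lemma grpB M x y : addgroup M -> M x -> M y -> M (x - y).
Proof. by move=> G Mx My; apply: grpD G _ _ Mx (grpN G My). Qed.

Lemma grpBK M x y : addgroup M -> M y -> M (x - y) -> M x.
Proof. by move=> G My Mxy; rewrite -(subrK y x); apply: grpD G _ _ Mxy My. Qed.

Lemma grpMn M x k : addgroup M -> M x -> M (x *+ k).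
Proof.
move=> G Mx; elim: k => [|k IH]; first by rewrite mulr0n; apply: grp0 G.
by rewrite mulrS; apply: grpD.
Qed.

Lemma grpMz M x (k : int) : addgroup M -> M x -> M (x *~ k).
Proof.
move=> G Mx; case: k => k; first exact: grpMn.
by rewrite NegzE mulrNz; apply: (grpN G); apply: grpMn.
Qed.

Lemma grpMz_absz M x (k : int) : addgroup M -> M (x *~ k) -> M (x *+ `|k|%N).
Proof. by move=> G; case: k => // k /(grpN G); rewrite NegzE mulrNz opprK. Qed.

Lemma sumset_group P Q : addgroup P -> addgroup Q -> addgroup (sumset P Q).
Proof.
move=> GP GQ; split.
- by exists 0, 0; rewrite addr0; split; [exact: (grp0 GP) | exact: (grp0 GQ) |].
- move=> _ _ [p [q [Pp Qq ->]]] [p' [q' [Pp' Qq' ->]]].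
  by exists (p + p'), (q + q'); rewrite addrACA; split; [apply: (grpD GP) | apply: (grpD GQ) |].
- move=> _ [p [q [Pp Qq ->]]].
  by exists (- p), (- q); rewrite opprD; split; [apply: (grpN GP) | apply: (grpN GQ) |].
Qed.

Lemma sumset0 P x : sumset P (eq^~ 0) x <-> P x.
Proof.
split=> [[p [_ [Pp -> ->]]]|Px]; first by rewrite addr0.
by exists x, 0; rewrite addr0.
Qed.

End AddGroup.

Section Brace.
Variables (V : zmodType) (B : brace V).
Implicit Types (M N P : V -> Prop) (a b c u v x y z : V).
Local Notation "a ∘ b" := (bmul B a b) (at level 40, left associativity).
Local Notation "a ⋆ b" := (star B a b) (at level 40, left associativity).
Local Notation inv := (binv B).

Lemma bmulr0 a : a ∘ 0 = a.
Proof.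
have E := bdistr B a 0 0; rewrite addr0 in E.
apply/eqP; rewrite -subr_eq0; apply/eqP; apply: (addrI (a ∘ 0)).
by rewrite addr0 addrA -E.
Qed.

Lemma bone0 : bone B = 0.
Proof. by rewrite -[bone B]bmulr0 bmul1l. Qed.

Lemma bmulE a b : a ∘ b = a + b + a ⋆ b.
Proof. by rewrite /star -[_ - a - b]addrA -opprD subrKC. Qed.

Lemma star_is_nmod_morphism a : nmod_morphism (star B a).
Proof.
split=> [|x y]; first by rewrite /star bmulr0 subrr subr0.
by rewrite /star bdistr opprD !addrA [LHS](ACl (1*3*5*2*4*6)).
Qed.

HB.instance Definition _ a :=
  GRing.isNmodMorphism.Build V V (star B a) (star_is_nmod_morphism a).

Lemma star0r a : a ⋆ 0 = 0. Proof. exact: raddf0. Qed.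
Lemma starDr a : {morph star B a : x y / x + y}. Proof. exact: raddfD. Qed.
Lemma starNr a : {morph star B a : x / - x}. Proof. exact: raddfN. Qed.
Lemma starMnr a k : {morph star B a : x / x *+ k}. Proof. exact: raddfMn. Qed.
Lemma starMzr a k : {morph star B a : x / x *~ k}. Proof. exact: raddfMz. Qed.

Lemma star0l a : 0 ⋆ a = 0.
Proof. by rewrite /star -bone0 bmul1l bone0 subr0 subrr. Qed.

Lemma star_bmull a b c : (a ∘ b) ⋆ c = a ⋆ (b ⋆ c) + a ⋆ c + b ⋆ c.
Proof.
rewrite {1}/star -bmulA !bmulE [a ⋆ _]starDr [a ⋆ (b + c)]starDr.
move: (a ⋆ b) (a ⋆ c) (b ⋆ c) (a ⋆ (b ⋆ c)) => ab ac bc abc.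
rewrite !opprD !addrA [LHS](ACl ((1*8)*(2*9)*(3*11)*(5*10)*7*6*4)) /=.
by rewrite !subrr !add0r.
Qed.

Lemma star_binvl a c : inv a ⋆ c = - (inv a ⋆ (a ⋆ c) + a ⋆ c).
Proof.
have := star_bmull (inv a) a c; rewrite bmulVl bone0 star0l => E.
by apply/eqP; rewrite -addr_eq0 addrCA addrA -E.
Qed.

(* [inv u ⋆ z + z] is lambda_{u^-1}(z), so this is u + z = u lambda_{u^-1}(z). *)
Lemma add_bmul_lambda u z : u + z = u ∘ (inv u ⋆ z + z).
Proof.
have := star_bmull u (inv u) z; rewrite bmulVr bone0 star0l => E.
rewrite bmulE starDr.
move: (u ⋆ z) (inv u ⋆ z) (u ⋆ (inv u ⋆ z)) E => q r p E.
by rewrite !addrA [RHS](ACl ((1*3)*(4*5*2))) /= -E addr0.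
Qed.

Lemma add_bmul_star u v : u + v = u ∘ v - u ⋆ v.
Proof. by rewrite bmulE addrK. Qed.

Lemma binvE x : inv x = - (x + inv x ⋆ x).
Proof. by apply/eqP; rewrite -addr_eq0 addrA -bmulE bmulVl bone0. Qed.

Lemma opp_bmul u : - u = inv u ∘ - (u ⋆ u).
Proof.
have -> : - (u ⋆ u) = u ∘ - u by rewrite bmulE subrr add0r starNr.
by rewrite bmulA bmulVl bmul1l.
Qed.

Record star_ideal M : Prop := StarIdeal {
  sideal_group :> addgroup M;
  sideal_starl : forall x t, M t -> M (x ⋆ t);
  sideal_starr : forall x t, M t -> M (t ⋆ x) }.

(* For an ideal [M], [zcent M] is the preimage of the star-center of A/M. *)
Definition zcent M a := forall x, M (a ⋆ x) /\ M (x ⋆ a).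

Lemma star_ideal_ext P M : (forall x, P x <-> M x) -> star_ideal P -> star_ideal M.
Proof.
move=> PM [[P0 PD PN] Pl Pr]; split; first split.
- exact/PM.
- by move=> x y /PM Px /PM Py; apply/PM/PD.
- by move=> x /PM Px; apply/PM/PN.
- by move=> x t /PM Pt; apply/PM/Pl.
- by move=> x t /PM Pt; apply/PM/Pr.
Qed.

Lemma star_ideal0 : star_ideal (eq^~ 0).
Proof.
split; first split=> //.
- by move=> x y -> ->; rewrite addr0.
- by move=> x ->; rewrite oppr0.
- by move=> x t ->; rewrite star0r.
- by move=> x t ->; rewrite star0l.
Qed.

Lemma star_ideal_zcent M : star_ideal M -> forall t, M t -> zcent M t.
Proof. by move=> IM t Mt x; split; [apply: sideal_starr | apply: sideal_starl]. Qed.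

Lemma subbrace_group S : subbrace B S -> addgroup S.
Proof. by case=> [[S0 [SD SN]] _]; split. Qed.

Lemma subbrace_star S x y : subbrace B S -> S x -> S y -> S (x ⋆ y).
Proof.
move=> SS Sx Sy; have G := subbrace_group SS; have [_ [_ [SM _]]] := SS.
by rewrite /star; apply: grpB G (grpB G (SM _ _ Sx Sy) Sx) Sy.
Qed.

Lemma ideal_of_star_closed J I : subbrace B J -> (forall x, I x -> J x) -> addgroup I ->
  (forall j t, J j -> I t -> I (j ⋆ t) /\ I (t ⋆ j)) -> ideal_of B J I.
Proof.
move=> SJ IJ GI IS; split=> //; split; first by case: GI.
split; first by rewrite bone0; apply: grp0 GI.
split=> [x y Ix Iy | x Ix].
  by rewrite bmulE; exact: (grpD GI (grpD GI Ix Iy) (IS _ _ (IJ _ Ix) Iy).1).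
have [_ [_ [_ SV]]] := SJ.
by rewrite binvE; apply/(grpN GI)/(grpD GI Ix); apply: (IS _ _ (SV _ (IJ _ Ix)) Ix).1.
Qed.

Lemma star_ideal_ideal M : star_ideal M -> ideal B M.
Proof.
move=> IM; apply: ideal_of_star_closed => //; first exact: sideal_group IM.
by move=> j t _ Mt; split; [apply: sideal_starl | apply: sideal_starr].
Qed.

Lemma ideal_star_ideal M : ideal B M -> star_ideal M.
Proof.
rewrite /ideal => -[_ [[M0 [MD MN]] _] IS]; split; first by split.
- by move=> x t Mt; case: (IS x t I Mt).
- by move=> x t Mt; case: (IS x t I Mt).
Qed.

Section CentralModulo.
Variables (M M' : V -> Prop).
Hypotheses (IM : star_ideal M) (IM' : star_ideal M') (M'_zcent : forall t, M' t -> zcent M t).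

Lemma star_shiftl u z y : M' z -> M ((u + z) ⋆ y - u ⋆ y).
Proof.
move=> M'z; have M'w : M' (inv u ⋆ z + z) := grpD IM' (sideal_starl IM' _ M'z) M'z.
have [Mwy _] := M'_zcent M'w y.
rewrite (add_bmul_lambda u z) star_bmull addrAC addrK.
exact: (grpD IM (sideal_starl IM _ Mwy) Mwy).
Qed.

Lemma star_addl u v x : M' (u ⋆ v) -> M' (v ⋆ x) -> M ((u + v) ⋆ x - u ⋆ x - v ⋆ x).
Proof.
move=> M'uv M'vx; have [_ Muvx] := M'_zcent M'vx u.
have Mshift := star_shiftl (u ∘ v) x (grpN IM' M'uv).
have -> : (u + v) ⋆ x - u ⋆ x - v ⋆ x =
    ((u ∘ v - u ⋆ v) ⋆ x - (u ∘ v) ⋆ x) + u ⋆ (v ⋆ x).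
  rewrite -add_bmul_star star_bmull.
  move: ((u + v) ⋆ x) (u ⋆ x) (v ⋆ x) (u ⋆ (v ⋆ x)) => s p q r.
  by rewrite !opprD !addrA [RHS](ACl ((1*3*4)*(2*5))) /= addNr addr0.
exact: (grpD IM Mshift Muvx).
Qed.

End CentralModulo.

Lemma star_addl_in M u v y : star_ideal M ->
  M (u ⋆ y) -> M (v ⋆ y) -> M (u ⋆ v) -> M ((u + v) ⋆ y).
Proof.
move=> IM Muy Mvy Muv; apply: (grpBK IM Muy); apply: (grpBK IM Mvy).
exact: (star_addl IM IM (star_ideal_zcent IM) Muv Mvy).
Qed.

Lemma star_oppl_in M u y : star_ideal M -> M (u ⋆ y) -> M (u ⋆ u) -> M ((- u) ⋆ y).
Proof.
move=> IM Muy Muu; have Mp := grpN IM Muu.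
rewrite opp_bmul star_bmull (star_binvl u y).
apply: (grpD IM); last exact: (sideal_starr IM _ Mp).
apply: (grpD IM); first exact: (sideal_starl IM _ (sideal_starr IM _ Mp)).
exact: (grpN IM (grpD IM (sideal_starl IM _ Muy) Muy)).
Qed.

Lemma zcent_ideal M : star_ideal M -> star_ideal (zcent M).
Proof.
move=> IM; split; first split.
- by move=> x; rewrite star0l star0r; split; apply: grp0 IM.
- move=> z z' Mz Mz' x; split; last by rewrite starDr; exact: (grpD IM (Mz x).2 (Mz' x).2).
  exact: (star_addl_in IM (Mz x).1 (Mz' x).1 (Mz z').1).
- move=> z Mz x; split; last by rewrite starNr; exact: (grpN IM (Mz x).2).
  exact: (star_oppl_in IM (Mz x).1 (Mz z).1).
- by move=> x t Mt; exact: (star_ideal_zcent IM (Mt x).2).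
- by move=> x t Mt; exact: (star_ideal_zcent IM (Mt x).1).
Qed.

Lemma star_mulzl_in M b (k : int) : star_ideal M -> M (b ⋆ b) -> M ((b *~ k) ⋆ b).
Proof.
move=> IM Mbb; have Mn n : M ((b *+ n) ⋆ b).
  elim: n => [|n IH]; first by rewrite mulr0n star0l; apply: grp0 IM.
  by rewrite mulrSr; exact: (star_addl_in IM IH Mbb IH).
case: k => n; first exact: Mn.
rewrite NegzE mulrNz; apply: (star_oppl_in IM (Mn _)).
by rewrite starMnr; exact: (grpMn _ IM (Mn _)).
Qed.

Lemma star_mulnl M u x k : star_ideal M -> zcent (zcent M) u ->
  M ((u *+ k) ⋆ x - (u ⋆ x) *+ k).
Proof.
move=> IM Zu; have IZ := zcent_ideal IM.
elim: k => [|k IH]; first by rewrite !mulr0n star0l subrr; apply: grp0 IM.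
have Zuk : zcent (zcent M) (u *+ k) := grpMn _ (zcent_ideal IZ) Zu.
have := grpD IM (star_addl IM IZ (fun _ h => h) (Zuk u).1 (Zu x).1) IH.
rewrite !mulrSr; move: ((u *+ k + u) ⋆ x) ((u *+ k) ⋆ x) (u ⋆ x) => s p r.
by rewrite addrAC subrKA -addrA -opprD.
Qed.

(* The preimage of the upper star-central series of A/N. *)
Fixpoint ucs N k : V -> Prop := if k is k'.+1 then zcent (ucs N k') else N.

Lemma ucs_ideal N k : star_ideal N -> star_ideal (ucs N k).
Proof. by move=> IN; elim: k => //= k; apply: zcent_ideal. Qed.

Lemma ucsSr N k a : ucs N k.+1 a <-> ucs (zcent N) k a.
Proof.
elim: k a => [//|k IH] a.
by split=> Ha x; have [Hax Hxa] := Ha x; split; apply/IH.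
Qed.

Lemma zeta_starE k a : zeta_star B k a <-> ucs (eq^~ 0) k a.
Proof.
elim: k a => [//|k IH] a.
by split=> Ha x; have [Hax Hxa] := Ha x; split; apply/IH.
Qed.

Lemma aseqS a i : aseq B a i.+1 = aseq B (a ⋆ a) i.
Proof. by elim: i => //= i ->. Qed.

Lemma ucs_aseq N k i a : ucs N (k + i) a -> ucs N k (aseq B a i).
Proof.
elim: i a => [|i IH] a; first by rewrite addn0.
by rewrite addnS aseqS => Ha; apply: IH; case: (Ha a).
Qed.

Lemma aseq_closed M a i : (forall x, M x -> M (x ⋆ x)) -> M a -> M (aseq B a i).
Proof. by move=> Mss; elim: i a => // i IH a Ma; rewrite aseqS; apply/IH/Mss. Qed.

Lemma cyc_sum0 a x : cyc_sum B a 0 x <-> x = 0.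
Proof.
split=> [[k ->]|->]; first by rewrite big_ord0.
by exists (fun=> 0); rewrite big_ord0.
Qed.

Lemma cyc_sumS a n x :
  cyc_sum B a n.+1 x <-> exists k y, cyc_sum B (a ⋆ a) n y /\ x = a *~ k + y.
Proof.
have shift (c : 'I_n -> int) :
    \sum_(i < n) aseq B a (lift ord0 i) *~ c i = \sum_(i < n) aseq B (a ⋆ a) i *~ c i.
  by apply: eq_bigr => i _; rewrite lift0 aseqS.
split=> [[k ->]|[k0 [_ [[k ->] ->]]]].
  exists (k ord0), (\sum_(i < n) aseq B (a ⋆ a) i *~ k (lift ord0 i)).
  by rewrite big_ord_recl shift; split=> //; exists (fun i => k (lift ord0 i)).
exists (fun i => if unlift ord0 i is Some j then k j else k0).
rewrite big_ord_recl unlift_none shift; congr (_ + _).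
by apply: eq_bigr => i _; rewrite liftK.
Qed.

Lemma cyc_sumSr a n x :
  cyc_sum B a n.+1 x <-> exists k y, cyc_sum B a n y /\ x = y + aseq B a n *~ k.
Proof.
split=> [[k ->]|[k0 [_ [[k ->] ->]]]].
  exists (k ord_max), (\sum_(i < n) aseq B a i *~ k (widen_ord (leqnSn n) i)).
  by rewrite big_ord_recr; split=> //; exists (fun i => k (widen_ord (leqnSn n) i)).
exists (fun i => if unlift ord_max i is Some j then k j else k0).
rewrite big_ord_recr unlift_none; congr (_ + _); apply: eq_bigr => i _.
have -> : widen_ord (leqnSn n) i = lift ord_max i by apply: ord_inj; rewrite lift_max.
by rewrite liftK lift_max.
Qed.

Lemma cyc_sum_group a n : addgroup (cyc_sum B a n).
Proof.
split.
- by exists (fun=> 0); rewrite big1.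
- move=> _ _ [k ->] [l ->]; exists (fun i => k i + l i).
  by rewrite -big_split; apply: eq_bigr => i _; rewrite mulrzDr.
- move=> _ [k ->]; exists (fun i => - k i).
  by rewrite -sumrN; apply: eq_bigr => i _; rewrite mulrNz.
Qed.

Lemma cyc_sum_min M a n x : addgroup M ->
  (forall i, (i < n)%N -> M (aseq B a i)) -> cyc_sum B a n x -> M x.
Proof.
move=> GM Ma [k ->]; elim/big_ind: _ => [|y z My Mz|i _]; first exact: grp0 GM.
  exact: (grpD GM My Mz).
exact: (grpMz _ GM (Ma i (ltn_ord i))).
Qed.

Lemma cyc_sum_in_ideal M a n x : star_ideal M -> M a -> cyc_sum B a n x -> M x.
Proof.
move=> IM Ma; apply: (cyc_sum_min (sideal_group IM)) => i _.
by apply: aseq_closed Ma => y My; exact: (sideal_starl IM _ My).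
Qed.

Lemma cyc_sum_br a n x : cyc_sum B a n x -> br B a x.
Proof.
move=> Hx S SS Sa; apply: (cyc_sum_min (subbrace_group SS) _ Hx) => i _.
by apply: aseq_closed Sa => y Sy; apply: subbrace_star.
Qed.

Lemma cyc_sum_widen a n x : cyc_sum B a n x -> cyc_sum B a n.+1 x.
Proof. by move=> Hx; apply/cyc_sumSr; exists 0, x; rewrite mulr0z addr0. Qed.

Lemma ucs_sumset_mem N n a : addgroup N -> ucs N n a -> sumset (cyc_sum B a n) N a.
Proof.
case: n => [|n] GN Ha; first by exists 0, a; rewrite add0r; split=> //; apply/cyc_sum0.
exists a, 0; rewrite addr0; split=> //; last exact: grp0 GN.
by apply/cyc_sumS; exists 1, 0; rewrite addr0; split=> //; apply: grp0 (cyc_sum_group _ _).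
Qed.

Lemma sumset_cyc_sumS N a n x :
  sumset (cyc_sum B a n.+1) N x <->
  exists k p, sumset (cyc_sum B (a ⋆ a) n) N p /\ x = a *~ k + p.
Proof.
split=> [[_ [q [/cyc_sumS [k [y [Cy ->]]] Nq ->]]] | [k [_ [[y [q [Cy Nq ->]]] ->]]]].
  by exists k, (y + q); split; [exists y, q | rewrite addrA].
by exists (a *~ k + y), q; split=> //; [apply/cyc_sumS; exists k, y | rewrite addrA].
Qed.

Lemma sumset_cyc_sum_zcent N a n x : star_ideal N -> ucs N n.+1 a ->
  sumset (cyc_sum B a n.+1) N x -> sumset (cyc_sum B a n) (zcent N) x.
Proof.
move=> IN Ha [_ [q [/cyc_sumSr [k [y [Cy ->]]] Nq ->]]].
have Za : zcent N (aseq B a n) := ucs_aseq (k := 1) Ha.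
have IZ := zcent_ideal IN.
exists y, (aseq B a n *~ k + q); split=> //; last by rewrite addrA.
exact: (grpD IZ (grpMz _ IZ Za) (star_ideal_zcent IN Nq)).
Qed.

Lemma star_cyclic_in P b (k l : int) p q : star_ideal P -> P (b ⋆ b) -> P p -> P q ->
  P ((b *~ k + p) ⋆ (b *~ l + q)).
Proof.
move=> IP Pbb Pp Pq; rewrite starDr starMzr.
apply: (grpD IP); last exact: (sideal_starl IP _ Pq).
apply: (grpMz _ IP); apply: (grpBK IP (star_mulzl_in k IP Pbb)).
exact: (star_shiftl IP IP (star_ideal_zcent IP) _ _ Pp).
Qed.

Section TBrace.
Hypothesis TB : T_brace B.

Lemma sumset_cyc_sum_ideal n N a : star_ideal N -> ucs N n a ->
  star_ideal (sumset (cyc_sum B a n) N).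
Proof.
elim: n N a => [|n IH] N a IN Ha.
  apply: star_ideal_ext IN => x; split=> [Nx | [_ [q [/cyc_sum0 -> Nq ->]]]].
    by exists 0, x; rewrite add0r; split=> //; apply/cyc_sum0.
  by rewrite add0r.
set I := sumset (cyc_sum B a n.+1) N.
have GI : addgroup I := sumset_group (cyc_sum_group _ _) IN.
have IJ := IH _ a (zcent_ideal IN) ((ucsSr _ _ _).1 Ha).
have I2 := IH N (a ⋆ a) IN (Ha a).1.
have I2_I p : sumset (cyc_sum B (a ⋆ a) n) N p -> I p.
  by move=> Hp; apply/sumset_cyc_sumS; exists 0, p; rewrite mulr0z add0r.
have N_I q : N q -> I q.
  by move=> Nq; exists 0, q; rewrite add0r; split=> //; apply: grp0 (cyc_sum_group _ _).
have I_star i t : I i -> I t -> I (i ⋆ t).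
  move=> /sumset_cyc_sumS [k [p [Pp ->]]] /sumset_cyc_sumS [l [q [Pq ->]]].
  exact: (I2_I _ (star_cyclic_in k l I2 (ucs_sumset_mem IN (Ha a).1) Pp Pq)).
have [_ SJ _] := star_ideal_ideal IJ.
apply/ideal_star_ideal/(TB (star_ideal_ideal IJ))/ideal_of_star_closed => //.
  by move=> x; exact: (sumset_cyc_sum_zcent IN Ha).
move=> _ t [y [z [Cy Zz ->]]] It.
have Iy : I y by exists y, 0; rewrite addr0; split=> //; [apply: cyc_sum_widen | apply: grp0 IN].
split.
  apply: (grpBK GI (I_star _ _ Iy It)); apply/N_I.
  exact: (star_shiftl IN (zcent_ideal IN) (fun _ h => h) _ _ Zz).
by rewrite starDr; apply: (grpD GI (I_star _ _ It Iy)); apply/N_I; exact: (Zz t).2.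
Qed.

Lemma br_ideal_cyc_sum n a : ucs (eq^~ 0) n a ->
  star_ideal (br B a) /\ (forall x, br B a x <-> cyc_sum B a n x).
Proof.
move=> Ha; have IC := sumset_cyc_sum_ideal star_ideal0 Ha.
have brE x : br B a x <-> cyc_sum B a n x.
  split=> [Hx|]; last exact: cyc_sum_br.
  have [_ SC _] := star_ideal_ideal IC.
  exact/sumset0/(Hx _ SC (ucs_sumset_mem star_ideal0 Ha)).
split=> //; apply: star_ideal_ext IC => x.
by split=> [/sumset0/brE | /brE/sumset0].
Qed.

End TBrace.

Section TorsionFree.
Hypothesis center_tf :
  forall z, star_center B z -> forall m : nat, (0 < m)%N -> z *+ m = 0 -> z = 0.
Local Notation Z := (ucs (eq^~ 0)).

Lemma ucs_torsion_free j u m : (0 < m)%N -> Z j.+1 u -> Z j (u *+ m) -> Z j u.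
Proof.
elim: j u => [|j IH] u m_gt0 Zu Zum; first exact: (center_tf Zu m_gt0 Zum).
have IZ := ucs_ideal j star_ideal0.
move=> x; split; apply: (IH _ m_gt0).
- exact: (Zu x).1.
- have := grpB IZ (Zum x).1 (star_mulnl x m IZ Zu).
  by move: ((u *+ m) ⋆ x) => s; rewrite opprB addrC subrK.
- exact: (Zu x).2.
- by rewrite -starMnr; exact: (Zum x).2.
Qed.

Lemma cyc_sum_mulz_eq0 n a (k : int) : Z n.+1 a -> k != 0 ->
  cyc_sum B (a ⋆ a) n (a *~ k) -> a *~ k = 0.
Proof.
elim: n a => [|n IH] a Za k_neq0 Ck; first by move/cyc_sum0: Ck.
have IZ := ucs_ideal n.+1 star_ideal0.
have Zak : Z n.+1 (a *~ k) := cyc_sum_in_ideal IZ (Za a).1 Ck.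
have Za' : Z n.+1 a.
  by apply: (ucs_torsion_free (m := `|k|%N)); rewrite ?absz_gt0 //; exact: grpMz_absz IZ Zak.
have last0 : aseq B (a ⋆ a) n = 0 := ucs_aseq (k := 0) (Za' a).1.
have /cyc_sumSr [l [y [Cy]]] := Ck; rewrite last0 mul0rz addr0 => Eak.
by apply: IH Za' k_neq0 _; rewrite Eak.
Qed.

Lemma ucs_cyc_sum_direct n a : Z n a -> cyc_sum_direct B a n.
Proof.
elim: n a => [|n IH] a Za k; first by move=> _ [].
set c := fun i => k (lift ord0 i).
have tE : \sum_(i < n) aseq B a (lift ord0 i) *~ k (lift ord0 i) =
    \sum_(i < n) aseq B (a ⋆ a) i *~ c i.
  by apply: eq_bigr => i _; rewrite lift0 aseqS.
rewrite big_ord_recl tE => /eqP; rewrite addr_eq0 => /eqP ak.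
have ak0 : a *~ k ord0 = 0.
  have [->|k_neq0] := eqVneq (k ord0) 0; first by rewrite mulr0z.
  apply: cyc_sum_mulz_eq0 Za k_neq0 _; rewrite ak.
  by apply: (grpN (cyc_sum_group _ _)); exists c.
move=> i; case: (unliftP ord0 i) => [j ->|->] //.
rewrite lift0 aseqS; apply: (IH _ (Za a).1 c).
by apply: oppr_inj; rewrite -ak ak0 oppr0.
Qed.

End TorsionFree.

End Brace.

Theorem lemma3p5 (V : zmodType) (B : brace V) (n : nat) (a : V) :
  T_brace B -> zeta_star B n a ->
  (ideal B (br B a) /\ (forall x, br B a x <-> cyc_sum B a n x)) /\
  ((forall z, star_center B z -> forall m : nat, (0 < m)%N -> z *+ m = 0 -> z = 0) ->
     (forall x, br B a x <-> cyc_sum B a n x) /\ cyc_sum_direct B a n).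
Proof.
move=> TB /zeta_starE Za; have [Ibr brE] := br_ideal_cyc_sum TB Za.
split; first by split; [exact: star_ideal_ideal|].
by move=> center_tf; split; last exact: (ucs_cyc_sum_direct center_tf Za).
Qed.
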